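(* Consider an implication of canonical form $(\ast)$ and an environment $\eta$ such that there is exactly one conjunct ($M=1$) and $\Pi(1)\ge\Omega(j)$ for all $1\le j\le N$. If the implication is unary $\eta$-valid, then the Parametricity Condition holds for it and $\eta$.
   Context: $\mathsf{Heap}$: finite partial functions $\mathsf{PosInt}\to\mathsf{Int}$; $g\sqsubseteq h$ means $h$ extends $g$; $h\cdot g$ union of disjoint heaps; componentwise on $\mathsf{Heap}^n$. $\mathsf{IRel}_n$: upward closed subsets of $\mathsf{Heap}^n$; $p*q=\{\mathbf f\cdot\mathbf g\mid\mathbf f\in p,\mathbf g\in q,\text{componentwise disjoint}\}$; $\Delta_n(X)=\{(h_1,\dots,h_n)\mid\exists f\in X.\ \forall k.\ f\sqsubseteq h_k\}$. Assertions: built from primitive assertions $P$, assertion variables, $\mathsf{true},\mathsf{false},\wedge,\vee,*$, quantifiers over integer variables. $n$-ary meaning under $\eta$ and $\rho:\mathsf{AVar}\to\mathsf{IRel}_n$: $[\![P]\!]^n=\Delta_n([\![P]\!]^{\mathrm{prim}}_\eta)$, $[\![a]\!]^n=\rho(a)$, connectives by $\mathsf{Heap}^n,\emptyset,\cap,\cup,*$, quantifiers by unions/intersections. $n$-ary $\eta$-validity of $\varphi\Rightarrow\psi$: $[\![\varphi]\!]^n_{\eta,\rho}\subseteq[\![\psi]\!]^n_{\eta,\rho}$ for all $\rho:\mathsf{AVar}\to\mathsf{IRel}_n$ (unary: $n=1$). Canonical form $(\ast)$: $\bigwedge_{i=1}^M\varphi_i*a_{i,1}*\cdots*a_{i,M_i}\Rightarrow\bigvee_{j=1}^N\psi_j*b_{j,1}*\cdots*b_{j,N_j}$,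 $M\ge1$, $N\ge0$, $\varphi_i,\psi_j$ free of assertion variables, every $b_{j,k}$ among the $a_{i,k}$. $V=\{a_{i,k}\}$; $\Pi(i)(c)=|\{k\mid a_{i,k}=c\}|$, $\Omega(j)(c)=|\{k\mid b_{j,k}=c\}|$; $\Pi(i)\ge\Omega(j)$ iff $\Pi(i)(c)\ge\Omega(j)(c)$ for all $c\in V$. Disjunct $j$ is empty if $N_j=0$. Parametricity Condition: for all $h,h_1,\dots,h_M\in\mathsf{Heap}$ with $h_i\sqsubseteq h$ and $h_i\in[\![\varphi_i]\!]^1_\eta$ for all $i$, either (1) there are $i,j$ with $h_i\in[\![\psi_j]\!]^1_\eta$ and $\Pi(i)\ge\Omega(j)$, or (2) there is an empty disjunct $j$ with $h\in[\![\psi_j]\!]^1_\eta$. *)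

From Stdlib Require Import ZArith List PeanoNat Fin.
Import ListNotations.

Record heap := Heap {
  hf : positive -> option Z;
  hfin : exists l : list positive, forall p, hf p <> None -> In p l }.

Definition sub_heap (g h : heap) : Prop :=
  forall p v, hf g p = Some v -> hf h p = Some v.

Definition hdisj (g h : heap) : Prop :=
  forall p, hf g p = None \/ hf h p = None.

Definition hunion_fun (g h : heap) (p : positive) : option Z :=
  match hf g p with Some v => Some v | None => hf h p end.

Lemma hunion_fin (g h : heap) :
  exists l : list positive, forall p, hunion_fun g h p <> None -> In p l.
Proof.
  destruct (hfin g) as [l1 H1]; destruct (hfin h) as [l2 H2].
  exists (l1 ++ l2); intros p Hp; apply in_or_app; unfold hunion_fun in Hp.
  destruct (hf g p) eqn:E.
  - left; apply H1; rewrite E; discriminate.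
  - right; apply H2; exact Hp.
Qed.

(* h · g (meaningful for disjoint heaps) *)
Definition hunion (g h : heap) : heap := Heap (hunion_fun g h) (hunion_fin g h).

Definition hvec (n : nat) := Fin.t n -> heap.

Definition upclosed {n : nat} (p : hvec n -> Prop) : Prop :=
  forall hs hs', (forall k, sub_heap (hs k) (hs' k)) -> p hs -> p hs'.

(* ---------- Assertions ----------
   Integer variables and assertion variables are both indexed by nat;
   primitive assertions range over an arbitrary type Pr. *)
Inductive assertion (Pr : Type) : Type :=
| APrim : Pr -> assertion Pr
| AVar  : nat -> assertion Pr
| ATrue : assertion Pr
| AFalse : assertion Pr
| AAnd  : assertion Pr -> assertion Pr -> assertion Pr
| AOr   : assertion Pr -> assertion Pr -> assertion Pr
| AStar : assertion Pr -> assertion Pr -> assertion Pr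
| AEx   : nat -> assertion Pr -> assertion Pr
| AAll  : nat -> assertion Pr -> assertion Pr.
Arguments APrim {Pr}. Arguments AVar {Pr}. Arguments ATrue {Pr}.
Arguments AFalse {Pr}. Arguments AAnd {Pr}. Arguments AOr {Pr}.
Arguments AStar {Pr}. Arguments AEx {Pr}. Arguments AAll {Pr}.

Definition env := nat -> Z.
Definition upd (eta : env) (x : nat) (v : Z) : env :=
  fun y => if Nat.eqb y x then v else eta y.

Fixpoint sem {Pr : Type} (prim_sem : Pr -> env -> heap -> Prop) (n : nat)
    (eta : env) (rho : nat -> hvec n -> Prop) (A : assertion Pr) : hvec n -> Prop :=
  match A with
  | APrim P => fun hs => exists f, prim_sem P eta f /\ forall k, sub_heap f (hs k)
  | AVar a => rho a
  | ATrue => fun _ => True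
  | AFalse => fun _ => False
  | AAnd p q => fun hs => sem prim_sem n eta rho p hs /\ sem prim_sem n eta rho q hs
  | AOr p q => fun hs => sem prim_sem n eta rho p hs \/ sem prim_sem n eta rho q hs
  | AStar p q => fun hs => exists f g : hvec n,
        (forall k, hdisj (f k) (g k)) /\ sem prim_sem n eta rho p f /\
        sem prim_sem n eta rho q g /\ hs = (fun k => hunion (f k) (g k))
  | AEx x p => fun hs => exists v : Z, sem prim_sem n (upd eta x v) rho p hs
  | AAll x p => fun hs => forall v : Z, sem prim_sem n (upd eta x v) rho p hs
  end.

Definition valid {Pr : Type} (prim_sem : Pr -> env -> heap -> Prop) (n : nat)
    (eta : env) (A B : assertion Pr) : Prop :=
  forall rho : nat -> hvec n -> Prop, (forall a, upclosed (rho a)) ->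
    forall hs, sem prim_sem n eta rho A hs -> sem prim_sem n eta rho B hs.

(* unary meaning: h ∈ [[A]]^1_eta  (independent of rho for variable-free A) *)
Definition usem {Pr : Type} (prim_sem : Pr -> env -> heap -> Prop) (eta : env)
    (A : assertion Pr) (h : heap) : Prop :=
  sem prim_sem 1 eta (fun _ _ => False) A (fun _ => h).

Fixpoint avar_free {Pr : Type} (A : assertion Pr) : Prop :=
  match A with
  | AVar _ => False
  | APrim _ | ATrue | AFalse => True
  | AAnd p q | AOr p q | AStar p q => avar_free p /\ avar_free q
  | AEx _ p | AAll _ p => avar_free p
  end.

(* ---------- Canonical form (ast) ----------
   A conjunct/disjunct is a pair (phi, [a_1; ...; a_k]) standing for
   phi * a_1 * ... * a_k (left-associated). *)
Definition chain {Pr : Type} (c : assertion Pr * list nat) : assertion Pr :=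
  fold_left (fun acc a => AStar acc (AVar a)) (snd c) (fst c).

Fixpoint bigAnd {Pr : Type} (l : list (assertion Pr)) : assertion Pr :=
  match l with
  | [] => ATrue
  | [x] => x
  | x :: xs => AAnd x (bigAnd xs)
  end.

Fixpoint bigOr {Pr : Type} (l : list (assertion Pr)) : assertion Pr :=
  match l with
  | [] => AFalse
  | [x] => x
  | x :: xs => AOr x (bigOr xs)
  end.

Definition lhs_of {Pr : Type} (L : list (assertion Pr * list nat)) : assertion Pr :=
  bigAnd (map chain L).
Definition rhs_of {Pr : Type} (R : list (assertion Pr * list nat)) : assertion Pr :=
  bigOr (map chain R).

Definition Vars {Pr : Type} (L : list (assertion Pr * list nat)) : list nat :=
  concat (map snd L).

Definition canonical {Pr : Type} (L R : list (assertion Pr * list nat)) : Prop :=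
  1 <= length L /\
  (forall c, In c L -> avar_free (fst c)) /\
  (forall c, In c R -> avar_free (fst c)) /\
  (forall c b, In c R -> In b (snd c) -> In b (Vars L)).

(* 0-based indices: i < M, j < N *)
Definition conj_at {Pr : Type} (L : list (assertion Pr * list nat)) (i : nat) :=
  nth i L (ATrue, []).

Definition Pi {Pr : Type} (L : list (assertion Pr * list nat)) (i c : nat) : nat :=
  count_occ Nat.eq_dec (snd (conj_at L i)) c.

Definition Omega {Pr : Type} (R : list (assertion Pr * list nat)) (j c : nat) : nat :=
  count_occ Nat.eq_dec (snd (conj_at R j)) c.

Definition Pi_ge_Omega {Pr : Type} (L R : list (assertion Pr * list nat)) (i j : nat) : Prop :=
  forall c, In c (Vars L) -> Omega R j c <= Pi L i c.

Definition parametricity {Pr : Type} (prim_sem : Pr -> env -> heap -> Prop)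
    (eta : env) (L R : list (assertion Pr * list nat)) : Prop :=
  forall (h : heap) (hs : nat -> heap),
    (forall i, i < length L ->
        sub_heap (hs i) h /\ usem prim_sem eta (fst (conj_at L i)) (hs i)) ->
    (exists i j, i < length L /\ j < length R /\
        usem prim_sem eta (fst (conj_at R j)) (hs i) /\ Pi_ge_Omega L R i j)
    \/
    (exists j, j < length R /\ snd (conj_at R j) = [] /\
        usem prim_sem eta (fst (conj_at R j)) h).

(* Proof idea: interpret every assertion variable by the full relation
   Heap (which is upward closed and contains the empty heap).  If h_1
   satisfies phi, then h_1 = h_1 . emp . ... . emp satisfies the conjunct,
   so by validity h_1 satisfies some disjunct psi_j * b_{j,1} * ...; hence a
   subheap of h_1 satisfies psi_j, and by upward closure so does h_1.  With
   Pi(1) >= Omega(j) given, this is alternative (1) of the condition. *)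

From Stdlib Require Import ZArith List PeanoNat.
From Stdlib Require Import FunctionalExtensionality ProofIrrelevance Lia.
Import ListNotations.

Lemma heap_ext (g h : heap) : (forall p, hf g p = hf h p) -> g = h.
Proof.
  destruct g as [g gfin], h as [h hfin']; simpl; intros E.
  assert (g = h) by (apply functional_extensionality; exact E); subst.
  f_equal; apply proof_irrelevance.
Qed.

Definition hemp : heap.
Proof. refine (Heap (fun _ => None) _); exists nil; intros p H; congruence. Defined.

Lemma hunion_hemp_r (h : heap) : hunion h hemp = h.
Proof.
  apply heap_ext; intros p; simpl; unfold hunion_fun.
  destruct (hf h p); reflexivity.
Qed.

Definition hdiff_fun (h f : heap) (p : positive) : option Z :=
  match hf f p with Some _ => None | None => hf h p end.

Lemma hdiff_fin (h f : heap) :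
  exists l : list positive, forall p, hdiff_fun h f p <> None -> In p l.
Proof.
  destruct (hfin h) as [l Hl]; exists l; intros p Hp; apply Hl.
  unfold hdiff_fun in Hp; destruct (hf f p); [congruence | exact Hp].
Qed.

Definition hdiff (h f : heap) : heap := Heap (hdiff_fun h f) (hdiff_fin h f).

Lemma hdisj_hdiff (h f : heap) : hdisj f (hdiff h f).
Proof. intros p; simpl; unfold hdiff_fun; destruct (hf f p); auto. Qed.

Lemma hunion_hdiff (f h : heap) : sub_heap f h -> hunion f (hdiff h f) = h.
Proof.
  intros Hfh; apply heap_ext; intros p; cbn; unfold hunion_fun; cbn; unfold hdiff_fun.
  destruct (hf f p) eqn:E; [symmetry; exact (Hfh p _ E) | reflexivity].
Qed.

Lemma hdiff_mono (f g h : heap) :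
  hdisj f g -> sub_heap (hunion f g) h -> sub_heap g (hdiff h f).
Proof.
  intros D Hh p v Hv; simpl; unfold hdiff_fun.
  destruct (D p) as [Hn | Hn]; [|congruence].
  rewrite Hn; apply Hh; simpl; unfold hunion_fun; rewrite Hn; exact Hv.
Qed.

Lemma sub_heap_hunion_l (f g : heap) : sub_heap f (hunion f g).
Proof. intros p v Hv; simpl; unfold hunion_fun; rewrite Hv; reflexivity. Qed.

Section Semantics.
Variable Pr : Type.
Variable ps : Pr -> env -> heap -> Prop.

Lemma sem_rho_irrelevant n (A : assertion Pr) :
  avar_free A -> forall eta rho rho' hs,
  sem ps n eta rho A hs -> sem ps n eta rho' A hs.
Proof.
  induction A; simpl; intros Hfree eta rho rho' hs H; try tauto.
  - destruct Hfree, H; split; eauto.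
  - destruct Hfree, H; [left | right]; eauto.
  - destruct Hfree as [H1 H2], H as (f & g & D & Hp & Hq & E).
    exists f, g; repeat split; eauto.
  - destruct H as [v Hv]; exists v; eauto.
  - intros v; eauto.
Qed.

Lemma sem_upclosed n (A : assertion Pr) :
  forall eta rho, (forall a, upclosed (rho a)) -> upclosed (sem ps n eta rho A).
Proof.
  induction A as [P | a | | | A1 IH1 A2 IH2 | A1 IH1 A2 IH2 | A1 IH1 A2 IH2
                 | x A IH | x A IH];
    simpl; intros eta rho Hrho hs hs' Hs H; try tauto.
  - destruct H as [f [Hp Hk]]; exists f; split; [exact Hp|].
    intros k p v Hv; apply Hs, Hk, Hv.
  - exact (Hrho a hs hs' Hs H).
  - destruct H; split; [eapply IH1 | eapply IH2]; eauto.
  - destruct H; [left; eapply IH1 | right; eapply IH2]; eauto.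
  - destruct H as (f & g & D & Hp & Hq & ->).
    exists f, (fun k => hdiff (hs' k) (f k)); repeat split.
    + intros k; apply hdisj_hdiff.
    + exact Hp.
    + apply (IH2 eta rho Hrho g); [|exact Hq].
      intros k; apply hdiff_mono; auto.
    + apply functional_extensionality; intros k.
      symmetry; apply hunion_hdiff.
      intros p v Hv; apply Hs, sub_heap_hunion_l, Hv.
  - destruct H as [v Hv]; exists v; eapply IH; eauto.
  - intros v; eapply IH; eauto.
Qed.

Definition star_var (acc : assertion Pr) (a : nat) : assertion Pr :=
  AStar acc (AVar a).

(* If every variable holds of the empty heaps, a chain holds wherever its
   base does: pad with empty heaps. *)
Lemma chain_of_base n eta (rho : nat -> hvec n -> Prop) (l : list nat) :
  (forall a, rho a (fun _ => hemp)) ->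
  forall acc hs, sem ps n eta rho acc hs ->
  sem ps n eta rho (fold_left star_var l acc) hs.
Proof.
  intros Hemp; induction l as [|a l IH]; simpl; intros acc hs H; [exact H|].
  apply IH; exists hs, (fun _ => hemp); split; [|split; [exact H | split; [apply Hemp|]]].
  - intros k p; right; reflexivity.
  - apply functional_extensionality; intros k; symmetry; apply hunion_hemp_r.
Qed.

Lemma base_of_chain n eta rho (l : list nat) :
  forall acc hs, sem ps n eta rho (fold_left star_var l acc) hs ->
  exists hs', (forall k, sub_heap (hs' k) (hs k)) /\ sem ps n eta rho acc hs'.
Proof.
  induction l as [|a l IH]; simpl; intros acc hs H.
  - exists hs; split; [intros k p v Hv; exact Hv | exact H].
  - destruct (IH _ _ H) as [hs' [Hsub Hx]].
    destruct Hx as (f & g & D & Hp & Hq & ->).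
    exists f; split; [|exact Hp].
    intros k p v Hv; apply Hsub, sub_heap_hunion_l, Hv.
Qed.

Lemma rhs_disjunct n eta rho (R : list (assertion Pr * list nat)) hs :
  sem ps n eta rho (rhs_of R) hs ->
  exists j, j < length R /\ sem ps n eta rho (chain (conj_at R j)) hs.
Proof.
  unfold rhs_of, conj_at; revert hs.
  induction R as [|c [|c' R'] IH]; simpl; intros hs H.
  - destruct H.
  - exists 0; split; [lia | exact H].
  - destruct H as [H | H].
    + exists 0; split; [lia | exact H].
    + destruct (IH _ H) as [j [Hj Hs]]; exists (S j); simpl in *; split; [lia | exact Hs].
Qed.

Definition rho_full (n : nat) : nat -> hvec n -> Prop := fun _ _ => True.

Lemma valid_single_conjunct eta (c : assertion Pr * list nat)
    (R : list (assertion Pr * list nat)) (h : heap) :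
  avar_free (fst c) ->
  (forall d, In d R -> avar_free (fst d)) ->
  valid ps 1 eta (chain c) (rhs_of R) ->
  usem ps eta (fst c) h ->
  exists j, j < length R /\ usem ps eta (fst (conj_at R j)) h.
Proof.
  intros Hc HR Hvalid Hh.
  assert (Hup : forall a, upclosed (rho_full 1 a)) by (intros a ? ? ? ?; exact I).
  assert (Hlhs : sem ps 1 eta (rho_full 1) (chain c) (fun _ => h)).
  { apply chain_of_base; [intros; exact I|].
    exact (sem_rho_irrelevant _ _ Hc _ _ _ _ Hh). }
  destruct (rhs_disjunct _ _ _ _ _ (Hvalid _ Hup _ Hlhs)) as [j [Hj Hdisj]].
  exists j; split; [exact Hj|].
  assert (Hfree : avar_free (fst (conj_at R j))) by (apply HR, nth_In, Hj).
  destruct (base_of_chain _ _ _ _ _ _ Hdisj) as [hs' [Hsub Hbase]].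
  apply (sem_rho_irrelevant _ _ Hfree _ (rho_full 1)).
  exact (sem_upclosed _ _ _ _ Hup _ _ Hsub Hbase).
Qed.

End Semantics.

Theorem mainTheorem7 (Pr : Type) (prim_sem : Pr -> env -> heap -> Prop) (eta : env)
    (L R : list (assertion Pr * list nat)) :
  canonical L R ->
  length L = 1 ->
  (forall j, j < length R -> Pi_ge_Omega L R 0 j) ->
  valid prim_sem 1 eta (lhs_of L) (rhs_of R) ->
  parametricity prim_sem eta L R.
Proof.
  intros [_ [HL [HR _]]] Hlen Hdom Hvalid h hs Hhs.
  destruct L as [|c [|c' L']]; simpl in Hlen; try discriminate.
  destruct (Hhs 0 ltac:(simpl; lia)) as [_ Hbase].
  destruct (valid_single_conjunct _ _ eta c R (hs 0)
              (HL c (or_introl eq_refl)) HR Hvalid Hbase) as [j [Hj Hpsi]].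
  left; exists 0, j; repeat split; [simpl; lia | exact Hj | exact Hpsi | exact (Hdom j Hj)].
Qed.
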